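(* Let $L$ be a post-Lie-Rinehart algebra over $R$, with anchor map $\rho$ and connection $\rhd$. Then \[ E\ell_R(L)=\{\delta X:X\in L\}\circ \mathrm{gen}(\{\delta X,\tilde\delta X:X\in L\}). \] That is, $E\ell_R(L)$ consists exactly of the (linear combinations of) compositions $\delta X\circ\phi_1\circ\cdots\circ\phi_k$ with $k\ge0$, $X\in L$, and each $\phi_i$ of the form $\delta Y$ or $\tilde\delta Y$ with $Y\in L$. In other words, these are all the ways of repeatedly composing elements of the forms $\delta X,\tilde\delta X$ such that the leftmost factor is of the form $\delta X$.
   Context: Let $R$ be a commutative unital algebra. A Lie-Rinehart algebra over $R$ is an $R$-module $L$ with a Lie bracket $\llbracket\cdot,\cdot\rrbracket$ and an $R$-linear Lie morphism $\rho:L\to\mathrm{Der}(R)$ such that $\llbracket X,fY\rrbracket=(\rho(X)f)Y+f\llbracket X,Y\rrbracket$. A connection is a map $(X,Y)\mapsto X\rhd Y$ on $L$ that is $R$-linear in $X$ and satisfies $X\rhd(fY)=(\rho(X)f)Y+f\,X\rhd Y$. Its torsion is $T(X,Y)=X\rhd Y-Y\rhd X-\llbracket X,Y\rrbracket$ and its curvature is $\mathcal{R}(X,Y,Z)=X\rhd(Y\rhd Z)-Y\rhd(X\rhd Z)-\llbracket X,Y\rrbracket\rhd Z$. A post-Lie-Rinehart algebra is a Lie-Rinehart algebra with a connection that is flat ($\mathcal{R}=0$) and has constant torsion ($X\rhd T(Y,Z)=T(X\rhd Y,Z)+T(Y,X\rhd Z)$). Put $[X,Y]:=-T(X,Y)$.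 The connection extends to $\mathrm{Hom}_R(L)$ by $(X\rhd u)(Y)=X\rhd u(Y)-u(X\rhd Y)$. Define $\delta X(Z)=Z\rhd X$ and $\tilde\delta X(Z)=Z\rhd X+[Z,X]$. $E\ell_R(L)$ is the $R$-module subalgebra of $\mathrm{Hom}_R(L)$ (with composition as product) generated by the elements $Y_1\rhd(Y_2\rhd(\cdots(Y_n\rhd\delta X)\cdots))$ with $n\ge0$ and $X,Y_i\in L$. For a set $A$ of endomorphisms, $\mathrm{gen}(A)$ denotes the algebra generated by $A$ with composition as product. *)

From HB Require Import structures.
From mathcomp Require Import all_boot all_order all_algebra.

Set Implicit Arguments.
Unset Strict Implicit.
Unset Printing Implicit Defensive.

Import GRing.Theory.
Local Open Scope ring_scope.

Section PostLieRinehart.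
Variables (K : fieldType) (R : comAlgType K) (L : lmodType R).
Variables (rho : L -> R -> R) (br : L -> L -> L) (conn : L -> L -> L).

Definition is_derivation (D : R -> R) : Prop :=
  (forall f g, D (f + g) = D f + D g) /\
  (forall (k : K) f, D (k *: f) = k *: D f) /\
  (forall f g, D (f * g) = D f * g + f * D g).

Definition is_lie_bracket : Prop :=
  (forall X Y Z, br (X + Y) Z = br X Z + br Y Z) /\
  (forall X Y Z, br X (Y + Z) = br X Y + br X Z) /\
  (forall (k : K) X Y, br (k%:A *: X) Y = k%:A *: br X Y) /\
  (forall (k : K) X Y, br X (k%:A *: Y) = k%:A *: br X Y) /\
  (forall X, br X X = 0) /\
  (forall X Y Z, br X (br Y Z) + br Y (br Z X) + br Z (br X Y) = 0).

Definition is_LieRinehart : Prop :=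
  is_lie_bracket /\
  (forall X, is_derivation (rho X)) /\
  (forall X Y g, rho (X + Y) g = rho X g + rho Y g) /\
  (forall (f : R) X g, rho (f *: X) g = f * rho X g) /\
  (forall X Y g, rho (br X Y) g = rho X (rho Y g) - rho Y (rho X g)) /\
  (forall X (f : R) Y, br X (f *: Y) = rho X f *: Y + f *: br X Y).

(* conn X Y stands for X |> Y *)
Definition is_connection : Prop :=
  (forall X Y Z, conn (X + Y) Z = conn X Z + conn Y Z) /\
  (forall (f : R) X Z, conn (f *: X) Z = f *: conn X Z) /\
  (forall X Y Z, conn X (Y + Z) = conn X Y + conn X Z) /\
  (forall X (f : R) Y, conn X (f *: Y) = rho X f *: Y + f *: conn X Y).

Definition torsion (X Y : L) : L := conn X Y - conn Y X - br X Y.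

Definition curvature (X Y Z : L) : L :=
  conn X (conn Y Z) - conn Y (conn X Z) - conn (br X Y) Z.

Definition is_postLieRinehart : Prop :=
  is_LieRinehart /\ is_connection /\
  (forall X Y Z, curvature X Y Z = 0) /\
  (forall X Y Z, conn X (torsion Y Z) = torsion (conn X Y) Z + torsion Y (conn X Z)).

Definition pbr (X Y : L) : L := - torsion X Y.

Definition ext_conn (X : L) (u : L -> L) : L -> L :=
  fun Y => conn X (u Y) - u (conn X Y).

Definition delta (X : L) : L -> L := fun Z => conn Z X.
Definition deltat (X : L) : L -> L := fun Z => conn Z X + pbr Z X.

(* Y1 |> (Y2 |> ( ... (Yn |> delta X))) for ys = [:: Y1; ...; Yn] *)
Definition iter_gen (X : L) (ys : seq L) : L -> L := foldr ext_conn (delta X) ys.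

(* El_R(L): the R-module subalgebra (under composition, non-unital)
   of Hom_R(L) generated by the iter_gen X ys. *)
Inductive Ell : (L -> L) -> Prop :=
| Ell_gen X ys : Ell (iter_gen X ys)
| Ell_zero : Ell (fun _ => 0)
| Ell_add u v : Ell u -> Ell v -> Ell (fun Y => u Y + v Y)
| Ell_scale (f : R) u : Ell u -> Ell (fun Y => f *: u Y)
| Ell_comp u v : Ell u -> Ell v -> Ell (u \o v).

Definition phi (p : bool * L) : L -> L := if p.1 then delta p.2 else deltat p.2.

Definition word (X : L) (s : seq (bool * L)) : L -> L :=
  delta X \o foldr (fun p g => phi p \o g) id s.

Inductive SpanWords : (L -> L) -> Prop :=
| SW_word X s : SpanWords (word X s)
| SW_zero : SpanWords (fun _ => 0)
| SW_add u v : SpanWords u -> SpanWords v -> SpanWords (fun Y => u Y + v Y)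
| SW_scale (f : R) u : SpanWords u -> SpanWords (fun Y => f *: u Y).

End PostLieRinehart.

From Pilot Require Import Defs.
From HB Require Import structures.
From mathcomp Require Import all_boot all_order all_algebra.
From Stdlib Require Import FunctionalExtensionality.

(** Write [Y |> u] for the connection extended to endomorphisms.  For additive [u]
    it is a derivation for composition, [Y |> (u \o v) = (Y |> u) \o v + u \o (Y |> v)],
    and flatness together with constancy of the torsion give
    [Y |> delta X = delta (Y |> X) - delta X \o deltat Y] and
    [Y |> deltat X = deltat (Y |> X) - delta X \o deltat Y].
    Hence the span of the words [delta X \o phi_1 \o ... \o phi_k] is closed under
    composition and under every [Y |> _]; as it contains every [delta X], it contains
    [E\ell_R(L)].  Conversely, [delta X \o deltat Y = delta (Y |> X) - Y |> delta X]
    lies in [E\ell_R(L)], and an induction over [E\ell_R(L)] with the same identities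
    shows that [E\ell_R(L)] is stable under right composition with every [deltat Y]
    (and with every [delta Y], trivially), so it contains every word. *)

Set Implicit Arguments.
Unset Strict Implicit.
Unset Printing Implicit Defensive.
Import GRing.Theory.
Local Open Scope ring_scope.

Section AdditiveMaps.
Variables (V W : zmodType) (u : V -> W).
Hypothesis uD : {morph u : x y / x + y}.

Lemma additive0 : u 0 = 0.
Proof. by apply: (@addrI _ (u 0)); rewrite -uD !addr0. Qed.

Lemma additiveN x : u (- x) = - u x.
Proof. by apply: (@addrI _ (u x)); rewrite -uD !subrr additive0. Qed.

Lemma additiveB x y : u (x - y) = u x - u y.
Proof. by rewrite uD additiveN. Qed.

End AdditiveMaps.

Section PostLieRinehart.
Variables (K : fieldType) (R : comAlgType K) (L : lmodType R).
Variables (rho : L -> R -> R) (br : L -> L -> L) (conn : L -> L -> L).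

Local Notation curvature := (Defs.curvature br conn).
Local Notation torsion := (Defs.torsion br conn).
Local Notation pbr := (Defs.pbr br conn).
Local Notation ext_conn := (Defs.ext_conn conn).
Local Notation delta := (Defs.delta conn).
Local Notation deltat := (Defs.deltat br conn).
Local Notation phi := (Defs.phi br conn).
Local Notation word := (Defs.word br conn).
Local Notation Ell := (Defs.Ell conn).
Local Notation SpanWords := (Defs.SpanWords br conn).

Hypothesis connDl : forall X Y Z, conn (X + Y) Z = conn X Z + conn Y Z.
Hypothesis connZl : forall (f : R) X Z, conn (f *: X) Z = f *: conn X Z.
Hypothesis connDr : forall X Y Z, conn X (Y + Z) = conn X Y + conn X Z.
Hypothesis connZr : forall X (f : R) Y, conn X (f *: Y) = rho X f *: Y + f *: conn X Y.
Hypothesis brDl : forall X Y Z, br (X + Y) Z = br X Z + br Y Z.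
Hypothesis brDr : forall X Y Z, br X (Y + Z) = br X Y + br X Z.
Hypothesis brxx : forall X, br X X = 0.
Hypothesis brZr : forall X (f : R) Y, br X (f *: Y) = rho X f *: Y + f *: br X Y.
Hypothesis flat : forall X Y Z, curvature X Y Z = 0.
Hypothesis torsion_const : forall X Y Z,
  conn X (torsion Y Z) = torsion (conn X Y) Z + torsion Y (conn X Z).

Lemma br_antisym X Y : br X Y = - br Y X.
Proof.
apply/eqP; rewrite -addr_eq0; apply/eqP.
by have := brxx (X + Y); rewrite brDl !brDr !brxx add0r addr0.
Qed.

Lemma torsionDl Z : {morph torsion^~ Z : X Y / X + Y}.
Proof.
move=> X Y; rewrite /Defs.torsion connDl connDr brDl !opprD.
by rewrite (addrACA (conn X Z)) (addrACA (conn X Z - conn Z X)).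
Qed.

Lemma torsionZl (f : R) X Y : torsion (f *: X) Y = f *: torsion X Y.
Proof.
rewrite /Defs.torsion connZl connZr (br_antisym (f *: X)) brZr (br_antisym X).
by rewrite !scalerBr scalerN !opprD !opprK (addrC (- (rho Y f *: X))) !addrA subrK.
Qed.

Lemma pbrDl Z : {morph pbr^~ Z : X Y / X + Y}.
Proof. by move=> X Y; rewrite /Defs.pbr torsionDl opprD. Qed.

Lemma pbrZl (f : R) X Y : pbr (f *: X) Y = f *: pbr X Y.
Proof. by rewrite /Defs.pbr torsionZl scalerN. Qed.

Lemma deltatE Y W : deltat Y W = conn Y W + br W Y.
Proof. by rewrite /Defs.deltat /Defs.pbr /Defs.torsion !opprD !opprK !addrA addrN add0r. Qed.

Lemma conn_br X Y Z : conn (br X Y) Z = conn X (conn Y Z) - conn Y (conn X Z).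
Proof.
by have /eqP := flat X Y Z; rewrite /Defs.curvature subr_eq0 eq_sym => /eqP.
Qed.

Lemma conn_pbr Y W X : conn Y (pbr W X) = pbr (conn Y W) X + pbr W (conn Y X).
Proof. by rewrite /Defs.pbr (additiveN (connDr Y)) torsion_const opprD. Qed.

Lemma ext_conn_delta Y X W :
  ext_conn Y (delta X) W = delta (conn Y X) W - delta X (deltat Y W).
Proof.
rewrite /Defs.ext_conn /Defs.delta deltatE connDl conn_br.
by rewrite opprD opprB addrCA [conn W (conn Y X) + _]addrC subrK addrC.
Qed.

Lemma ext_conn_deltat Y X W :
  ext_conn Y (deltat X) W = deltat (conn Y X) W - delta X (deltat Y W).
Proof.
have -> : ext_conn Y (deltat X) W = ext_conn Y (delta X) W + pbr W (conn Y X).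
  rewrite /Defs.ext_conn /Defs.deltat /Defs.delta connDr conn_pbr.
  by rewrite opprD addrACA [pbr (conn Y W) X + _]addrC addrK.
by rewrite ext_conn_delta /Defs.deltat addrAC.
Qed.

Lemma ext_conn_phi Y p W :
  ext_conn Y (phi p) W = phi (p.1, conn Y p.2) W - delta p.2 (deltat Y W).
Proof. by case: p => [[] X]; [apply: ext_conn_delta | apply: ext_conn_deltat]. Qed.

Lemma ext_conn_additive Y u :
  {morph u : x y / x + y} -> {morph ext_conn Y u : x y / x + y}.
Proof.
by move=> uD a b; rewrite /Defs.ext_conn uD !connDr uD opprD addrACA.
Qed.

Lemma ext_conn_comp Y u v : {morph u : x y / x + y} ->
  ext_conn Y (u \o v) = fun Z => ext_conn Y u (v Z) + u (ext_conn Y v Z).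
Proof.
move=> uD; apply: functional_extensionality => Z.
by rewrite /Defs.ext_conn /= (additiveB uD) addrA subrK.
Qed.

Lemma ext_conn0 Y : ext_conn Y (fun _ => 0) = fun _ => 0.
Proof.
apply: functional_extensionality => Z.
by rewrite /Defs.ext_conn (additive0 (connDr Y)) subr0.
Qed.

Lemma ext_connD Y u v :
  ext_conn Y (fun Z => u Z + v Z) = fun Z => ext_conn Y u Z + ext_conn Y v Z.
Proof.
by apply: functional_extensionality => Z; rewrite /Defs.ext_conn connDr opprD addrACA.
Qed.

Lemma ext_connZ Y (f : R) u :
  ext_conn Y (fun Z => f *: u Z) = fun Z => rho Y f *: u Z + f *: ext_conn Y u Z.
Proof.
by apply: functional_extensionality => Z; rewrite /Defs.ext_conn connZr scalerBr addrA.
Qed.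

Definition phis (s : seq (bool * L)) : L -> L := foldr (fun p g => phi p \o g) id s.

Lemma phiD p : {morph phi p : x y / x + y}.
Proof.
by case: p => [[] X] a b; rewrite /Defs.phi /Defs.deltat /Defs.delta /= ?pbrDl connDl // addrACA.
Qed.

Lemma phiZ p : scalable (phi p).
Proof.
by case: p => [[] X] f a; rewrite /Defs.phi /Defs.deltat /Defs.delta /= ?pbrZl connZl // scalerDr.
Qed.

Lemma phisD s : {morph phis s : x y / x + y}.
Proof. by elim: s => [//|p s IH] a b; rewrite /= IH phiD. Qed.

Lemma phisZ s : scalable (phis s).
Proof. by elim: s => [//|p s IH] f a; rewrite /= IH phiZ. Qed.

Lemma phis_cat s t Z : phis (s ++ t) Z = phis s (phis t Z).
Proof. by elim: s => [//|p s IH]; rewrite /= IH. Qed.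

Lemma wordE X s : word X s = delta X \o phis s.
Proof. by []. Qed.

Lemma word_phis X s t : word X s \o phis t = word X (s ++ t).
Proof. by apply: functional_extensionality => Z; rewrite !wordE /= phis_cat. Qed.

Lemma word_rcons X s p : word X (rcons s p) = word X s \o phi p.
Proof. by rewrite -cats1 -word_phis. Qed.

Lemma wordD X s : {morph word X s : x y / x + y}.
Proof. by move=> a b; rewrite wordE /= phisD /Defs.delta connDl. Qed.

Lemma wordZ X s : scalable (word X s).
Proof. by move=> f a; rewrite wordE /= phisZ /Defs.delta connZl. Qed.

Lemma sub_closed (P : (L -> L) -> Prop) :
  (forall u v, P u -> P v -> P (fun Z => u Z + v Z)) ->
  (forall (f : R) u, P u -> P (fun Z => f *: u Z)) ->
  forall u v, P u -> P v -> P (fun Z => u Z - v Z).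
Proof.
move=> PD PZ u v Pu Pv; have -> : (fun Z => u Z - v Z) = fun Z => u Z + (-1) *: v Z.
  by apply: functional_extensionality => Z; rewrite scaleN1r.
by apply: PD => //; apply: PZ.
Qed.

Lemma SpanWords_sub u v :
  SpanWords u -> SpanWords v -> SpanWords (fun Z => u Z - v Z).
Proof. exact: (@sub_closed SpanWords (@SW_add _ _ _ br conn) (@SW_scale _ _ _ br conn)). Qed.

Lemma SpanWords_additive u : SpanWords u -> {morph u : x y / x + y}.
Proof.
elim=> {u} [X s||u v _ IHu _ IHv|f u _ IH] a b /=.
- exact: wordD.
- by rewrite addr0.
- by rewrite IHu IHv addrACA.
- by rewrite IH scalerDr.
Qed.

Lemma SpanWords_scalable u : SpanWords u -> scalable u.
Proof.
elim=> {u} [X s||u v _ IHu _ IHv|f u _ IH] g a /=.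
- exact: wordZ.
- by rewrite scaler0.
- by rewrite IHu IHv scalerDr.
- by rewrite IH !scalerA mulrC.
Qed.

Lemma SpanWords_comp_phis u t : SpanWords u -> SpanWords (u \o phis t).
Proof.
elim=> {u} [X s||u v _ IHu _ IHv|f u _ IH].
- by rewrite word_phis; apply: SW_word.
- exact: SW_zero.
- exact: SW_add IHu IHv.
- exact: SW_scale IH.
Qed.

Lemma SpanWords_comp u v : SpanWords u -> SpanWords v -> SpanWords (u \o v).
Proof.
move=> Su; have uD := SpanWords_additive Su; have uZ := SpanWords_scalable Su.
elim=> {v} [W t||v1 v2 _ IH1 _ IH2|f v _ IH].
- exact: SpanWords_comp_phis ((true, W) :: t) Su.
- have -> : u \o (fun _ : L => 0) = fun _ : L => 0.
    by apply: functional_extensionality => Z; rewrite /= additive0.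
  exact: SW_zero.
- have -> : u \o (fun Z => v1 Z + v2 Z) = fun Z => (u \o v1) Z + (u \o v2) Z.
    by apply: functional_extensionality => Z; rewrite /= uD.
  exact: SW_add.
- have -> : u \o (fun Z => f *: v Z) = fun Z => f *: (u \o v) Z.
    by apply: functional_extensionality => Z; rewrite /= uZ.
  exact: SW_scale.
Qed.

Lemma SpanWords_ext_word Y X s : SpanWords (ext_conn Y (word X s)).
Proof.
elim/last_ind: s => [|t p IH].
  have -> : ext_conn Y (word X [::]) =
      fun W => word (conn Y X) [::] W - word X [:: (false, Y)] W.
    by apply: functional_extensionality => W; rewrite ext_conn_delta.
  by apply: SpanWords_sub; apply: SW_word.
have -> : ext_conn Y (word X (rcons t p)) = fun W =>
    (ext_conn Y (word X t) \o phis [:: p]) W +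
    (word X (rcons t (p.1, conn Y p.2)) W - word X (t ++ [:: (true, p.2); (false, Y)]) W).
  apply: functional_extensionality => W.
  rewrite word_rcons ext_conn_comp; last exact: wordD.
  by rewrite ext_conn_phi (additiveB (wordD X t)) word_rcons -word_phis.
apply: SW_add; first exact: SpanWords_comp_phis.
by apply: SpanWords_sub; apply: SW_word.
Qed.

Lemma SpanWords_ext Y u : SpanWords u -> SpanWords (ext_conn Y u).
Proof.
elim=> {u} [X s||u v _ IHu _ IHv|f u Su IH].
- exact: SpanWords_ext_word.
- by rewrite ext_conn0; apply: SW_zero.
- by rewrite ext_connD; apply: SW_add.
- by rewrite ext_connZ; apply: SW_add; apply: SW_scale.
Qed.

Lemma Ell_SpanWords u : Ell u -> SpanWords u.
Proof.
elim=> {u} [X ys||u v _ IHu _ IHv|f u _ IH|u v _ IHu _ IHv].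
- elim: ys => [|Y ys IH]; first exact: (SW_word br conn X [::]).
  exact: SpanWords_ext IH.
- exact: SW_zero.
- exact: SW_add.
- exact: SW_scale.
- exact: SpanWords_comp.
Qed.

Lemma Ell_sub u v : Ell u -> Ell v -> Ell (fun Z => u Z - v Z).
Proof. exact: (@sub_closed Ell (@Ell_add _ _ _ conn) (@Ell_scale _ _ _ conn)). Qed.

Lemma Ell_additive u : Ell u -> {morph u : x y / x + y}.
Proof.
elim=> {u} [X ys||u v _ IHu _ IHv|f u _ IH|u v _ IHu _ IHv] a b /=.
- elim: ys a b => [|Y ys IH]; first by move=> a b; apply: connDl.
  exact: ext_conn_additive.
- by rewrite addr0.
- by rewrite IHu IHv addrACA.
- by rewrite IH scalerDr.
- by rewrite IHv IHu.
Qed.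

Lemma Ell_ext Y u : Ell u -> Ell (ext_conn Y u).
Proof.
elim=> {u} [X ys||u v _ IHu _ IHv|f u Eu IH|u v Eu IHu Ev IHv].
- exact: (Ell_gen conn X (Y :: ys)).
- by rewrite ext_conn0; apply: Ell_zero.
- by rewrite ext_connD; apply: Ell_add.
- by rewrite ext_connZ; apply: Ell_add; apply: Ell_scale.
- rewrite ext_conn_comp; last exact: Ell_additive.
  by apply: Ell_add; apply: Ell_comp.
Qed.

Lemma Ell_delta_deltat X Y : Ell (delta X \o deltat Y).
Proof.
have -> : delta X \o deltat Y = fun W => delta (conn Y X) W - ext_conn Y (delta X) W.
  by apply: functional_extensionality => W; rewrite ext_conn_delta opprB addrC subrK.
apply: Ell_sub; first exact: (Ell_gen conn _ [::]).
by apply: Ell_ext; apply: (Ell_gen conn _ [::]).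
Qed.

Lemma Ell_ext_comp_deltat Y' u : Ell u ->
  (forall Y, Ell (u \o deltat Y)) -> forall Y, Ell (ext_conn Y' u \o deltat Y).
Proof.
move=> Eu Eud Y; have uD := Ell_additive Eu.
have -> : ext_conn Y' u \o deltat Y = fun W =>
    ext_conn Y' (u \o deltat Y) W -
    ((u \o deltat (conn Y' Y)) W - (u \o (delta Y \o deltat Y')) W).
  apply: functional_extensionality => W.
  by rewrite (ext_conn_comp Y' (deltat Y) uD) ext_conn_deltat (additiveB uD) addrK.
apply: Ell_sub; first exact: Ell_ext.
by apply: Ell_sub; [apply: Eud | apply: Ell_comp Eu (Ell_delta_deltat _ _)].
Qed.

Lemma Ell_comp_deltat u Y : Ell u -> Ell (u \o deltat Y).
Proof.
move=> Eu; elim: Eu Y => {u} [X ys||u v _ IHu _ IHv|f u _ IH|u v Eu _ _ IHv] Y.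
- elim: ys Y => [|Y' ys IH] Y; first exact: Ell_delta_deltat.
  exact: Ell_ext_comp_deltat (Ell_gen conn X ys) IH Y.
- exact: Ell_zero.
- exact: Ell_add (IHu Y) (IHv Y).
- exact: Ell_scale (IH Y).
- exact: Ell_comp Eu (IHv Y).
Qed.

Lemma Ell_comp_phi u p : Ell u -> Ell (u \o phi p).
Proof.
case: p => [[] Y] Eu; first exact: Ell_comp Eu (Ell_gen conn Y [::]).
exact: Ell_comp_deltat.
Qed.

Lemma Ell_comp_phis u s : Ell u -> Ell (u \o phis s).
Proof. by elim: s u => [//|p s IH] u Eu; apply: (IH (u \o phi p)); apply: Ell_comp_phi. Qed.

Lemma SpanWords_Ell u : SpanWords u -> Ell u.
Proof.
elim=> {u} [X s||u v _ IHu _ IHv|f u _ IH].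
- exact: Ell_comp_phis s (Ell_gen conn X [::]).
- exact: Ell_zero.
- exact: Ell_add.
- exact: Ell_scale.
Qed.

End PostLieRinehart.

Theorem mainTheorem6 (K : fieldType) (R : comAlgType K) (L : lmodType R)
  (rho : L -> R -> R) (br : L -> L -> L) (conn : L -> L -> L) :
  is_postLieRinehart rho br conn ->
  forall u : L -> L, Ell conn u <-> SpanWords br conn u.
Proof.
move=> [[[brDl [brDr [_ [_ [brxx _]]]]] [_ [_ [_ [_ brZr]]]]]].
move=> [[connDl [connZl [connDr connZr]]] [flat torsion_const]] u.
split; [exact: Ell_SpanWords | exact: SpanWords_Ell].
Qed.
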